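(* Let $X$ be a metrizable space and let $\mathcal{K}$ be the ideal of all closed compact subsets of $X$. If $C(X)_\mathcal{K}$ is closed under uniform limits (i.e. whenever a sequence in $C(X)_\mathcal{K}$ converges uniformly on $X$ to some $f\in\mathbb{R}^X$, then $f\in C(X)_\mathcal{K}$), then the set of all non-isolated points of $X$ is a member of $\mathcal{K}$.
   Context: For $f\in\mathbb{R}^X$, $D_f$ denotes the set of points of discontinuity of $f$. For an ideal $\mathcal{P}$ of closed subsets of $X$ (a family of closed sets closed under finite unions and under passing to closed subsets), $C(X)_\mathcal{P}=\{f\in\mathbb{R}^X\colon \overline{D_f}\in\mathcal{P}\}$. *)

From HB Require Import structures.
From mathcomp Require Import all_boot all_order all_algebra.
From mathcomp Require Import all_classical all_reals all_analysis.
Set Implicit Arguments. Unset Strict Implicit. Unset Printing Implicit Defensive.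
Import Order.TTheory GRing.Theory Num.Theory.
Import numFieldNormedType.Exports.
Local Open Scope classical_set_scope.
Local Open Scope ring_scope.

Definition disc_points {R : realType} {X : topologicalType} (f : X -> R) : set X :=
  [set x | ~ {for x, continuous f}].

Definition in_K {X : topologicalType} (A : set X) : Prop := closed A /\ compact A.

Definition CK {R : realType} {X : topologicalType} : set (X -> R) :=
  [set f | in_K (closure (disc_points f))].

Definition unif_conv {R : realType} {X : Type} (fs : nat -> X -> R) (f : X -> R) : Prop :=
  forall e : R, 0 < e -> exists N : nat, forall n : nat, (N <= n)%N ->
    forall x : X, `|fs n x - f x| < e.

Definition non_isolated {X : topologicalType} : set X := [set x | ~ open [set x]].

From HB Require Import structures.
From mathcomp Require Import all_boot all_order all_algebra.
From mathcomp Require Import all_classical all_reals all_analysis.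
From mathcomp Require Import lra.
Import Order.TTheory GRing.Theory Num.Theory.
Local Open Scope classical_set_scope.
Local Open Scope ring_scope.

(* The non-isolated points form a closed set, so in a metric space it is
   enough that every sequence x of non-isolated points has a cluster point.
   If x had none, every x k would have a punctured neighbourhood avoiding the
   range of x, so the function equal to 1/(k+1) at x k and to 0 off the range
   of x is discontinuous at every x k, because x k is not isolated.  This
   function is the uniform limit of its cutoffs below 1/(n+1), which have
   finite support and hence lie in C(X)_K; by hypothesis the closure of its
   discontinuity set is then compact, and it contains the range of x, which
   therefore has a cluster point after all. *)

Section sequential_compactness.
Context {R : realType} {X : pseudoMetricType R}.

Lemma cluster_seqP (x : nat -> X) (p : X) :
  cluster (x @ \oo) p <->
  forall e : R, 0 < e -> forall N, exists2 n, (N <= n)%N & ball p e (x n).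
Proof.
split=> [xp e e0 N|xp A B [N _ xA] /nbhs_ballP[e e0 peB]].
- have xN : (x @ \oo) (x @` [set n | (N <= n)%N]).
    by exists N => // n Nn; exists n.
  by have [_ [[n Nn <-] pxn]] := xp _ _ xN (nbhsx_ballx p e e0); exists n.
- by have [n Nn pxn] := xp e e0 N; exists (x n); split; [exact: xA|exact: peB].
Qed.

Lemma separated_seq_not_cluster (x : nat -> X) (e : R) (p : X) : 0 < e ->
  (forall m n, (m < n)%N -> ~ ball (x m) e (x n)) -> ~ cluster (x @ \oo) p.
Proof.
move=> e0 xsep /cluster_seqP xp.
have e20 : 0 < e / 2 by rewrite divr_gt0.
have [m _ pxm] := xp _ e20 0%N.
have [n mn pxn] := xp _ e20 m.+1.
by apply: (xsep m n mn); rewrite [e]splitr; exact: ball_triangle (ball_sym pxm) pxn.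
Qed.

Lemma greedy_separated_seq (A : set X) (e : R) :
  (forall s : seq X, exists y, A y /\ forall c, c \in s -> ~ ball c e y) ->
  exists x : nat -> X,
    (forall n, A (x n)) /\ forall m n, (m < n)%N -> ~ ball (x m) e (x n).
Proof.
move=> /choice[g gP].
pose L := fix L n := if n is n.+1 then rcons (L n) (g (L n)) else [::].
exists (fun n => g (L n)); split=> [n|m n mn]; first exact: (gP _).1.
apply: (gP (L n)).2; elim: n mn => // n IH.
rewrite ltnS leq_eqVlt => /orP[/eqP ->|/IH mL]; rewrite /= mem_rcons in_cons.
  by rewrite eqxx.
by rewrite mL orbT.
Qed.

Variable A : set X.
Hypothesis A_seq_cluster :
  forall x : nat -> X, (forall n, A (x n)) -> exists p, cluster (x @ \oo) p.

Lemma ultra_small_ball {F : set_system X} : UltraFilter F -> F A ->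
  forall e : R, 0 < e -> exists c, F (ball c e).
Proof.
move=> UF FA e e0; apply: contrapT => /forallNP noball.
have FnotB c : F (~` ball c e).
  by case: (in_ultra_setVsetC (ball c e) UF) => // /noball.
have FAnotBs (s : seq X) :
    F (A `&` [set y | forall c, c \in s -> ~ ball c e y]).
  elim: s => [|c s IH]; first exact: filterS FA.
  apply: filterS (filterI IH (FnotB c)) => y [[Ay ys] ncy]; split=> // c'.
  by rewrite in_cons => /orP[/eqP ->|/ys].
have [x [xA xsep]] :=
  @greedy_separated_seq A e (fun s : seq X => filter_ex (FAnotBs s)).
have [p] := A_seq_cluster x xA; exact: separated_seq_not_cluster e0 xsep.
Qed.

Lemma small_balls_cvg {F : set_system X} {PF : ProperFilter F} : F A ->
  (forall e : R, 0 < e -> exists c, F (ball c e)) -> exists p : X, F --> p.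
Proof.
move=> FA Fball.
have [c Fc] := choice (fun n : nat => Fball n.+1%:R^-1 ltac:(by [])).
have [y yP] := choice (fun n => filter_ex (filterI FA (Fc n))).
have [p /cluster_seqP yp] := A_seq_cluster y (fun n => (yP n).1).
exists p; apply/fcvg_ballP => e e0.
have e20 : 0 < e / 2 by rewrite divr_gt0.
have e40 : 0 < e / 4 by rewrite divr_gt0.
have [k _ ke] := near_infty_natSinv_lt (PosNum e40).
have [n kn pyn] := yp _ e20 k.
have /= := ke n kn; set r := n.+1%:R^-1 => re.
apply: filterS (Fc n) => z cz.
apply: (@le_ball _ _ p (e / 2 + r + r)); first lra.
exact: ball_triangle (ball_triangle pyn (ball_sym (yP n).2)) cz.
Qed.

Lemma seq_cluster_compact : closed A -> compact A.
Proof.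
move=> cA; rewrite compact_ultra => F UF FA.
have [p Fp] := small_balls_cvg FA (ultra_small_ball UF FA).
exists p; split=> //; apply: cA => U /Fp FU; exact: filter_ex (filterI FA FU).
Qed.

End sequential_compactness.

Section non_isolated_points.
Context {T : topologicalType}.

Lemma closed_non_isolated : closed (@non_isolated T).
Proof.
move=> p clp; apply: contrapT => /contrapT op.
have [z [zn zp]] := clp [set p] (open_nbhs_nbhs (conj op erefl)).
by move: zn; rewrite zp.
Qed.

Lemma non_isolated_nbhs (p : T) (W : set T) :
  non_isolated p -> nbhs p W -> exists2 z, W z & z != p.
Proof.
move=> np pW; apply: contrapT => /forall2NP Wp; apply: np.
rewrite openE => _ ->; apply: filterS pW => z Wz.
by have [//|/negP/negPn/eqP] := Wp z.
Qed.

Lemma not_cluster_seq_nbhs (x : nat -> T) (p : T) : accessible_space T ->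
  ~ cluster (x @ \oo) p -> \forall z \near p, range x z -> z = p.
Proof.
move=> T1 pncl.
have [A [B [[N _ xA] pB AB0]]] :
    exists A B, [/\ (x @ \oo) A, nbhs p B & A `&` B = set0].
  apply: contrapT => nAB; apply: pncl => A B xA pB.
  by apply/set0P/eqP => AB0; apply: nAB; exists A, B.
pose S := x @` [set n | (n < N)%N /\ x n != p].
have cS : closed S.
  apply: (accessible_finite_set_closed.1 T1).
  by apply: finite_image; apply: sub_finite_set (finite_II N) => n [].
have pS : nbhs p (~` S).
  by apply: open_nbhs_nbhs; split; [exact: closed_openC|case=> n [_ /eqP]].
near=> z => -[n _ xnz]; rewrite -xnz; have [Nn|nN] := leqP N n.
  have : (A `&` B) (x n) by split; [exact: xA|rewrite xnz; near: z; exact: pB].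
  by rewrite AB0.
apply/eqP/negP => /negP xnp.
suff : ~ S z by apply; exists n.
near: z; exact: pS.
Unshelve. all: by end_near.
Qed.

End non_isolated_points.

Section discontinuity_points.
Context {R : realType} {T : topologicalType}.
Implicit Types g : T -> R.

Lemma disc_points_sub_closed g (S : set T) :
  closed S -> (forall z, g z != 0 -> S z) -> disc_points g `<=` S.
Proof.
move=> cS gS p Dp; apply: contrapT => Sp; apply: Dp.
apply: (near_cst_continuous 0); near=> z.
apply/eqP/negP => /negP /gS; near: z.
by apply: open_nbhs_nbhs; split; [exact: closed_openC|].
Unshelve. all: by end_near.
Qed.

Lemma CK_finite_support g :
  accessible_space T -> finite_set [set z | g z != 0] -> CK g.
Proof.
move=> T1 fin.
have cS : closed [set z | g z != 0] := accessible_finite_set_closed.1 T1 _ fin.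
have DS : closure (disc_points g) `<=` [set z | g z != 0].
  rewrite [X in _ `<=` X]((closure_id _).1 cS); apply: closureS.
  exact: disc_points_sub_closed.
split; first exact: closed_closure.
exact: subclosed_compact (@closed_closure T _) (finite_compact fin) DS.
Qed.

Lemma disc_points_isolated_peak g (p : T) : non_isolated p -> g p != 0 ->
  (\forall z \near p, z != p -> g z = 0) -> disc_points g p.
Proof.
move=> np gp gz0 gc; have gp_gt0 : 0 < `|g p| by rewrite normr_gt0.
have : nbhs p [set z | `|g p - g z| < `|g p| /\ (z != p -> g z = 0)].
  by near=> z; split; near: z; [exact: cvgr_dist_lt|exact: gz0].
case/(non_isolated_nbhs _ _ np) => z [gpz gz] zp.
by move: gpz; rewrite gz // subr0 ltxx.
Unshelve. all: by end_near.
Qed.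

Definition cutoff (e : R) g (z : T) : R := if e <= `|g z| then g z else 0.

Lemma unif_conv_cutoff g : unif_conv (fun n => cutoff n.+1%:R^-1 g) g.
Proof.
move=> e e0; have [N _ Ne] := near_infty_natSinv_lt (PosNum e0).
exists N => n Nn z; rewrite /cutoff.
case: ifPn => [_|]; first by rewrite subrr normr0.
by rewrite -ltNge sub0r normrN => gz; exact: lt_trans gz (Ne n Nn).
Qed.

Lemma CK_cutoff e g :
  accessible_space T -> finite_set [set z | e <= `|g z|] -> CK (cutoff e g).
Proof.
move=> T1 fin; apply: CK_finite_support T1 _; apply: sub_finite_set fin => z /=.
by rewrite /cutoff; case: ifP => [ez _ //|_]; rewrite eqxx.
Qed.

Definition seq_bump (x : nat -> T) (z : T) : R :=
  if pselect (exists k, x k = z) is left _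
  then (xget 0%N [set k | x k = z]).+1%:R^-1 else 0.

Lemma seq_bump_gt0 (x : nat -> T) k : 0 < seq_bump x (x k).
Proof.
by rewrite /seq_bump; case: pselect => [_|[]]; [rewrite invr_gt0 ltr0n|exists k].
Qed.

Lemma seq_bump_neq0 (x : nat -> T) z : seq_bump x z != 0 -> range x z.
Proof.
by rewrite /seq_bump; case: pselect => [[k xk] _|_]; [exists k|rewrite eqxx].
Qed.

Lemma seq_bump_superlevel_finite (x : nat -> T) e :
  0 < e -> finite_set [set z | e <= `|seq_bump x z|].
Proof.
move=> e0; have [N _ Ne] := near_infty_natSinv_lt (PosNum e0).
apply: sub_finite_set (finite_image x (finite_II N)) => z /=.
rewrite /seq_bump; case: pselect => [xz|_]; last by rewrite normr0 leNgt e0.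
have xk := xgetPex 0%N xz; set k := xget _ _ in xk *.
rewrite ger0_norm ?invr_ge0 ?ler0n // => ek; exists k => //=.
by rewrite ltnNge; apply/negP => /Ne /=; rewrite ltNge ek.
Qed.

Lemma range_sub_disc_points_seq_bump (x : nat -> T) : accessible_space T ->
  (forall n, non_isolated (x n)) -> (forall p, ~ cluster (x @ \oo) p) ->
  range x `<=` disc_points (seq_bump x).
Proof.
move=> T1 xni xncl _ [k _ <-].
apply: disc_points_isolated_peak (xni k) (lt0r_neq0 (seq_bump_gt0 x k)) _.
apply: filterS (not_cluster_seq_nbhs _ _ T1 (xncl (x k))) => z zk zxk.
by apply/eqP; apply: contraNT zxk => /seq_bump_neq0 /zk ->.
Qed.

End discontinuity_points.

Theorem theorem3p2 (R : realType) (X : metricType R) :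
  (forall (fs : nat -> X -> R) (f : X -> R),
      (forall n, CK (fs n)) -> unif_conv fs f -> CK f) ->
  in_K (@non_isolated X).
Proof.
move=> CK_unif_closed; have cA := @closed_non_isolated X.
split=> //; apply: seq_cluster_compact cA => x xA.
apply: contrapT => /forallNP xncl.
have T1 : accessible_space X := hausdorff_accessible (@metric_hausdorff _ X).
pose f : X -> R := seq_bump x.
have [_ cptD] : CK f.
  apply: CK_unif_closed (unif_conv_cutoff _) => n.
  by apply: CK_cutoff T1 _; exact: seq_bump_superlevel_finite.
have xD : (x @ \oo) (closure (disc_points f)).
  exists 0%N => // n _; apply: subset_closure.
  exact: range_sub_disc_points_seq_bump.
by have [p [_ /xncl]] := cptD _ _ xD.
Qed.
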